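(* For every $t>0$, $\mathbf R\in S'_{\mathbf R}$ and $\mathbf K\in S'_{\mathbf K}$, the partial Hessians $\nabla^2_{\mathbf x\mathbf x}f_t$ and $\nabla^2_{\mathbf y\mathbf y}f_t$ of $f_t$ are non-singular, where $\mathbf x=\mathrm{veh}(\mathbf R)$ and $\mathbf y=\mathrm{vec}(\mathbf N)$.
   Context: All matrices are real. Fix integers $m,n_1,n_2\ge 1$, $J\ge 0$. Let $\mathbf H_1\in\mathbb R^{n_1\times m}$, $\mathbf H_2\in\mathbb R^{n_2\times m}$, $\mathbf H_{3j}\in\mathbb R^{n_{3j}\times m}$ ($j=1,\dots,J$); $\mathbf W_2=\mathbf H_2^T\mathbf H_2$, $\mathbf W_{3j}=\mathbf H_{3j}^T\mathbf H_{3j}$, $\mathbf H=\begin{bmatrix}\mathbf H_1\\ \mathbf H_2\end{bmatrix}$; $P_T,P_{Ij}>0$. $S'_{\mathbf R}=\{\mathbf R\text{ symmetric}:\mathbf R>0,\ \mathrm{tr}(\mathbf R)<P_T,\ \mathrm{tr}(\mathbf W_{3j}\mathbf R)<P_{Ij}\ \forall j\}$; $S'_{\mathbf K}=\{\mathbf K=\begin{bmatrix}\mathbf I&\mathbf N\\ \mathbf N^T&\mathbf I\end{bmatrix}:\mathbf N\in\mathbb R^{n_1\times n_2},\ \mathbf K>0\}$. $f(\mathbf R,\mathbf K)=\ln|\mathbf I+\mathbf K^{-1}\mathbf H\mathbf R\mathbf H^T|-\ln|\mathbf I+\mathbf W_2\mathbf R|$; for $t>0$, $f_t(\mathbf R,\mathbf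 K)=f(\mathbf R,\mathbf K)+t^{-1}\ln|\mathbf R|+t^{-1}\ln(P_T-\mathrm{tr}\mathbf R)+\sum_j t^{-1}\ln(P_{Ij}-\mathrm{tr}(\mathbf W_{3j}\mathbf R))-t^{-1}\ln|\mathbf K|$. $\mathrm{veh}(\mathbf R)$ is the vector of lower-triangular (including diagonal) entries of $\mathbf R$, $\mathrm{vec}(\mathbf N)$ stacks the columns of $\mathbf N$; $f_t$ is viewed as a function of the independent real variables $\mathbf x,\mathbf y$. *)

From HB Require Import structures.
From mathcomp Require Import all_boot all_order all_algebra.
From mathcomp Require Import all_classical all_reals all_analysis.
Set Implicit Arguments. Unset Strict Implicit. Unset Printing Implicit Defensive.
Import Order.TTheory GRing.Theory Num.Theory.
Import numFieldNormedType.Exports.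
Local Open Scope ring_scope.

Section Defs.
Variable R : realType.

Definition posdef n (A : 'M[R]_n) : Prop :=
  forall v : 'cV[R]_n, v != 0 -> 0 < (v^T *m A *m v) 0 0.

Definition symmx n (A : 'M[R]_n) : Prop := A^T = A.

(* Index list of veh: lower-triangular pairs (i,j), i >= j, column by column. *)
Definition lowpairs m : seq ('I_m * 'I_m) :=
  [seq (i, j) | j : 'I_m <- enum 'I_m, i : 'I_m <- [seq i : 'I_m <- enum 'I_m | (nat_of_ord j <= nat_of_ord i)%N]].

Definition nx m := size (lowpairs m).

(* veh(R): vector of the lower-triangular entries (including diagonal) *)
Definition veh m (A : 'M[R]_m) : 'rV[R]_(nx m) :=
  \row_(k < nx m) \sum_(i < m) \sum_(j < m)
     (if nth (i, j) (lowpairs m) k == (i, j) then A i j else 0).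

(* the symmetric matrix whose veh is x *)
Definition Rmat m (x : 'rV[R]_(nx m)) : 'M[R]_m :=
  \matrix_(i, j) \sum_(k < nx m)
     (if (nth (i, j) (lowpairs m) k == (i, j)) || (nth (i, j) (lowpairs m) k == (j, i))
      then x 0 k else 0).

(* vec(N): stacks the columns of N *)
Definition vecN n1 n2 (N : 'M[R]_(n1, n2)) : 'rV[R]_(n2 * n1) := mxvec N^T.
Definition Nmat n1 n2 (y : 'rV[R]_(n2 * n1)) : 'M[R]_(n1, n2) := (vec_mx y)^T.

Definition Kmat n1 n2 (N : 'M[R]_(n1, n2)) : 'M[R]_(n1 + n2) :=
  block_mx 1%:M N N^T 1%:M.

Definition Hmat m n1 n2 (H1 : 'M[R]_(n1, m)) (H2 : 'M[R]_(n2, m)) : 'M[R]_(n1 + n2, m) :=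
  col_mx H1 H2.

Definition f m n1 n2 (H1 : 'M[R]_(n1, m)) (H2 : 'M[R]_(n2, m))
    (Rm : 'M[R]_m) (K : 'M[R]_(n1 + n2)) : R :=
  let H := Hmat H1 H2 in
  ln (\det (1%:M + invmx K *m H *m Rm *m H^T))
  - ln (\det (1%:M + (H2^T *m H2) *m Rm)).

Definition ft m n1 n2 (J : nat) (n3 : 'I_J -> nat)
    (H1 : 'M[R]_(n1, m)) (H2 : 'M[R]_(n2, m)) (H3 : forall j : 'I_J, 'M[R]_(n3 j, m))
    (PT : R) (PI : 'I_J -> R) (t : R)
    (Rm : 'M[R]_m) (K : 'M[R]_(n1 + n2)) : R :=
  f H1 H2 Rm K + t^-1 * ln (\det Rm) + t^-1 * ln (PT - \tr Rm)
  + \sum_(j < J) t^-1 * ln (PI j - \tr ((H3 j)^T *m H3 j *m Rm))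
  - t^-1 * ln (\det K).

Definition ft_xy m n1 n2 (J : nat) (n3 : 'I_J -> nat)
    (H1 : 'M[R]_(n1, m)) (H2 : 'M[R]_(n2, m)) (H3 : forall j : 'I_J, 'M[R]_(n3 j, m))
    (PT : R) (PI : 'I_J -> R) (t : R)
    (x : 'rV[R]_(nx m)) (y : 'rV[R]_(n2 * n1)) : R :=
  ft H1 H2 H3 PT PI t (Rmat x) (Kmat (Nmat y)).

Definition hessian d (F : 'rV[R]_d -> R) (z : 'rV[R]_d) : 'M[R]_d :=
  \matrix_(a, b) 'D_(delta_mx 0 a) ('D_(delta_mx 0 b) F) z.

End Defs.

From HB Require Import structures.
From mathcomp Require Import all_boot all_order all_algebra.
From mathcomp Require Import all_classical all_reals all_analysis.
From mathcomp Require Import all_fingroup ring lra.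
Set Implicit Arguments. Unset Strict Implicit. Unset Printing Implicit Defensive.
Import Order.TTheory GRing.Theory Num.Theory.
Import numFieldNormedType.Exports.
Local Open Scope ring_scope.

(* Along a linear parametrisation [w |-> Y0 + f w], the Hessian form of [ln det] is
   [(u, v) |-> - tr (P (f u) P (f v))] with [P = (Y0 + f z)^-1], by Jacobi's formula
   and the derivative of the inverse.
   In [R], the two log-determinants of [f] give [tr ((X2 V)^2) - tr ((X1 V)^2)] with
   [X1 = H^T M^-1 H], [M = K + H R H^T], and [X2 = H2^T (I + H2 R H2^T)^-1 H2].  As
   the lower-right block of [K] is [I], the lower-right block of [M^-1] dominates the
   inverse of that of [M], i.e. [X2 <= X1] in the Loewner order; and [tr ((X V)^2)]
   is monotone in [X >= 0].  So [f] is concave in [R], and the barrier [ln det R]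
   makes the form negative definite.  In [K], inversion is order-reversing, so [f] is
   convex in [K], and the barrier [- ln det K] makes the form positive definite.  A
   definite form is nondegenerate, hence both partial Hessians are non-singular. *)

Lemma invmxM (R : comUnitRingType) n (A B : 'M[R]_n) :
  A \in unitmx -> B \in unitmx -> invmx (A *m B) = invmx B *m invmx A.
Proof.
move=> uA uB; have uAB : A *m B \in unitmx by rewrite unitmx_mul uA.
have E : invmx B *m invmx A *m (A *m B) = 1%:M.
  by rewrite mulmxA -[_ *m invmx A *m A]mulmxA mulVmx // mulmx1 mulVmx.
by rewrite -[RHS]mulmx1 -(mulmxV uAB) mulmxA E mul1mx.
Qed.

Lemma invmx_push_through (R : comUnitRingType) m n (A : 'M[R]_(m, n))
    (B : 'M[R]_(n, m)) :
  1%:M + A *m B \in unitmx -> 1%:M + B *m A \in unitmx ->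
  invmx (1%:M + A *m B) *m A = A *m invmx (1%:M + B *m A).
Proof.
move=> uAB uBA; have AE : A *m (1%:M + B *m A) = (1%:M + A *m B) *m A.
  by rewrite mulmxDr mulmxDl mulmx1 mul1mx mulmxA.
by rewrite -[LHS](mulmxK uBA) -[invmx _ *m A *m _]mulmxA AE mulmxA mulVmx // mul1mx.
Qed.

Lemma det_1D_invmx_mul (R : fieldType) n (K X : 'M[R]_n) : K \in unitmx ->
  \det (1%:M + invmx K *m X) = \det (K + X) / \det K.
Proof.
by move=> uK; rewrite -(mulVmx uK) -mulmxDr det_mulmx det_inv mulrC.
Qed.

Lemma invmx_1D_invmx_mul (R : comUnitRingType) n (K X : 'M[R]_n) :
  K \in unitmx -> K + X \in unitmx ->
  invmx (1%:M + invmx K *m X) *m invmx K = invmx (K + X).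
Proof.
move=> uK uKX; have KE : K *m (1%:M + invmx K *m X) = K + X.
  by rewrite mulmxDr mulmx1 mulKVmx.
have uY : 1%:M + invmx K *m X \in unitmx by move: uKX; rewrite -KE unitmx_mul => /andP[].
by rewrite -KE invmxM.
Qed.

Lemma linear_mulmxl (R : comPzRingType) d m n p (A : 'M[R]_(m, n))
    (g : 'rV[R]_d -> 'M[R]_(n, p)) :
  linear g -> linear (fun x => A *m g x).
Proof. by move=> lg a u w; rewrite lg mulmxDr -scalemxAr. Qed.

Lemma linear_mulmxr (R : comPzRingType) d m n p (B : 'M[R]_(n, p))
    (g : 'rV[R]_d -> 'M[R]_(m, n)) :
  linear g -> linear (fun x => g x *m B).
Proof. by move=> lg a u w; rewrite lg mulmxDl -scalemxAl. Qed.

Section PositiveMatrices.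
Variable R : rcfType.

Definition qform n (v : 'cV[R]_n) (A : 'M[R]_n) : R := (v^T *m A *m v) 0 0.
Definition posdefmx n (A : 'M[R]_n) := forall v, v != 0 -> 0 < qform v A.
Definition psdmx n (A : 'M[R]_n) := forall v, 0 <= qform v A.

Lemma qform0 n (A : 'M[R]_n) : qform 0 A = 0.
Proof. by rewrite /qform mulmx0 mxE. Qed.

Lemma qformD n (A B : 'M[R]_n) v : qform v (A + B) = qform v A + qform v B.
Proof. by rewrite /qform mulmxDr mulmxDl mxE. Qed.

Lemma qformB n (A B : 'M[R]_n) v : qform v (A - B) = qform v A - qform v B.
Proof. by rewrite /qform mulmxBr mulmxBl !mxE. Qed.

Lemma qformZ n (A : 'M[R]_n) a v : qform v (a *: A) = a * qform v A.
Proof. by rewrite /qform -scalemxAr -scalemxAl mxE. Qed.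

Lemma qform_mulmx m n (H : 'M[R]_(n, m)) (A : 'M[R]_n) u :
  qform u (H^T *m A *m H) = qform (H *m u) A.
Proof. by rewrite /qform trmx_mul !mulmxA. Qed.

Lemma qform1_gt0 n (v : 'cV[R]_n) : v != 0 -> 0 < qform v 1%:M.
Proof.
move=> v0; rewrite /qform mulmx1 mxE.
have [i vi0] : exists i, v i 0 != 0.
  apply/existsP; apply: contraNT v0; rewrite negb_exists => /forallP vi0.
  by apply/eqP/matrixP => i j; rewrite (ord1 j) mxE; apply/eqP/negPn.
rewrite (bigD1 i) //= ltr_wpDr ?sumr_ge0 // => [j _|]; rewrite mxE -expr2.
  exact: sqr_ge0.
by rewrite exprn_even_gt0.
Qed.

Lemma posdefmx1 n : posdefmx (1%:M : 'M[R]_n).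
Proof. by move=> v; apply: qform1_gt0. Qed.

Lemma posdefmx_psd n (A : 'M[R]_n) : posdefmx A -> psdmx A.
Proof.
move=> pA v; have [->|v0] := eqVneq v 0; first by rewrite qform0.
exact/ltW/pA.
Qed.

Lemma psdmxD n (A B : 'M[R]_n) : psdmx A -> psdmx B -> psdmx (A + B).
Proof. by move=> pA pB v; rewrite qformD addr_ge0. Qed.

Lemma posdefmxDr n (A B : 'M[R]_n) : posdefmx A -> psdmx B -> posdefmx (A + B).
Proof. by move=> pA pB v v0; rewrite qformD ltr_wpDr ?pA. Qed.

Lemma psdmx_conj m n (H : 'M[R]_(n, m)) (A : 'M[R]_m) :
  psdmx A -> psdmx (H *m A *m H^T).
Proof. by move=> pA u; rewrite -[H in H *m A]trmxK qform_mulmx. Qed.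

Lemma posdefmx_unit n (A : 'M[R]_n) : posdefmx A -> A \in unitmx.
Proof.
move=> pA; rewrite unitmxE unitfE; apply/negP => /det0P [v v0 vA].
have vT0 : v^T != 0 by apply: contra v0 => /eqP/(congr1 trmx); rewrite trmxK trmx0 => ->.
by have := pA _ vT0; rewrite /qform trmxK vA mul0mx mxE ltxx.
Qed.

Lemma posdefmx_inv n (A : 'M[R]_n) :
  A^T = A -> posdefmx A -> posdefmx (invmx A).
Proof.
move=> sA pA v v0; have uA := posdefmx_unit pA.
have -> : qform v (invmx A) = qform (invmx A *m v) A.
  by rewrite -qform_mulmx trmx_inv sA mulVmx ?mul1mx.
by apply: pA; apply: contra v0 => /eqP vA0; rewrite -[v](mulKVmx uA) vA0 mulmx0.
Qed.

Lemma posdefmx_schur n (a : R) (r : 'rV[R]_n) (D : 'M[R]_n) :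
  posdefmx (block_mx a%:M r r^T D) -> 0 < a /\ posdefmx (D - a^-1 *: (r^T *m r)).
Proof.
move=> pA; have a0 : 0 < a.
  have e0 : col_mx 1%:M 0 != 0 :> 'cV[R]_(1 + n).
    by rewrite col_mx_eq0 negb_and idmxE oner_eq0.
  have := pA _ e0; rewrite /qform tr_col_mx mul_row_block mul_row_col trmx0 trmx1.
  by rewrite !mul1mx !mul0mx !mulmx0 !addr0 mulmx1 mxE eqxx mulr1n.
split=> // x x0; pose z := col_mx (- a^-1 *: (r *m x)) x.
have z0 : z != 0 by apply: contra x0; rewrite col_mx_eq0 => /andP[_].
(* [z] minimises the quadratic form in its first coordinate. *)
have Az : block_mx a%:M r r^T D *m z = col_mx 0 ((D - a^-1 *: (r^T *m r)) *m x).
  rewrite mul_block_col mul_scalar_mx scalerA mulrN mulfV ?gt_eqF // scaleN1r.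
  by rewrite addNr mulmxBl -scalemxAl -scalemxAr scaleNr mulmxA addrC.
have := pA _ z0; rewrite /qform -mulmxA Az tr_col_mx mul_row_col mulmx0 add0r.
by rewrite mulmxA.
Qed.

Lemma cholesky n (A : 'M[R]_n) :
  A^T = A -> posdefmx A -> exists C : 'M[R]_n, A = C *m C^T.
Proof.
elim: n A => [|n IH] A; first by exists 0; apply/matrixP => -[].
move: A; rewrite -add1n => A; rewrite -[A]submxK (mx11_scalar (ulsubmx A)).
set a := ulsubmx A 0 0; set r := ursubmx A; set D := drsubmx A.
rewrite tr_block_mx => /eq_block_mx [_ hc _ hD].
have -> : dlsubmx A = r^T by rewrite -hc trmxK.
move=> pA; have [a0 pS] := posdefmx_schur pA.
have sS : (D - a^-1 *: (r^T *m r))^T = D - a^-1 *: (r^T *m r).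
  by rewrite linearB /= linearZ /= trmx_mul trmxK hD.
have [C eC] := IH _ sS pS.
pose s := Num.sqrt a; have ss : s * s = a by rewrite -expr2 sqr_sqrtr // ltW.
have sV : s * s^-1 = 1 by rewrite mulfV // gt_eqF // sqrtr_gt0.
exists (block_mx s%:M 0 (s^-1 *: r^T) C).
rewrite tr_block_mx mulmx_block !trmx0 !mulmx0 !addr0 mul0mx addr0.
rewrite tr_scalar_mx linearZ /= trmxK -eC mul_scalar_mx scale_scalar_mx ss mul_scalar_mx.
rewrite [s *: (_ *: r)]scalerA sV scale1r mul_mx_scalar [s *: (_ *: r^T)]scalerA sV.
by rewrite scale1r -scalemxAl -scalemxAr scalerA -invfM ss addrC subrK.
Qed.

Lemma det_posdefmx_gt0 n (A : 'M[R]_n) : A^T = A -> posdefmx A -> 0 < \det A.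
Proof.
move=> sA pA; have [C eC] := cholesky sA pA.
have := posdefmx_unit pA; rewrite eC unitmxE unitfE det_mulmx det_tr mulf_eq0 orbb.
by rewrite lt0r mulf_eq0 orbb => ->; rewrite -expr2 sqr_ge0.
Qed.

Lemma mxtrace_gram n (C W : 'M[R]_n) : \tr (C *m C^T *m W) = \sum_i qform (col i C) W.
Proof.
rewrite -mulmxA mxtrace_mulC; apply: eq_bigr => i _; rewrite /qform !mxE.
by apply: eq_bigr => l _; rewrite !mxE; congr (_ * _); apply: eq_bigr => k _; rewrite !mxE.
Qed.

Lemma mxtrace_posdef_psd_ge0 n (P W : 'M[R]_n) :
  P^T = P -> posdefmx P -> psdmx W -> 0 <= \tr (P *m W).
Proof.
move=> sP pP pW; have [C ->] := cholesky sP pP.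
by rewrite mxtrace_gram sumr_ge0.
Qed.

(* A psd matrix is a limit of the positive definite matrices [A + e%:M]. *)
Lemma mxtrace_psd_ge0 n (A W : 'M[R]_n) :
  A^T = A -> psdmx A -> psdmx W -> 0 <= \tr (A *m W).
Proof.
move=> sA pA pW.
have trW : 0 <= \tr W.
  by rewrite -[W]mul1mx mxtrace_posdef_psd_ge0 ?trmx1 //; apply: posdefmx1.
have Ae e : 0 < e -> 0 <= \tr (A *m W) + e * \tr W.
  move=> e0; rewrite -mxtraceZ -mxtraceD -mul_scalar_mx -mulmxDl.
  apply: mxtrace_posdef_psd_ge0 => //; first by rewrite linearD /= sA tr_scalar_mx.
  rewrite -scalemx1 addrC; apply: (posdefmxDr _ pA) => v v0.
  by rewrite qformZ mulr_gt0 ?qform1_gt0.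
rewrite -oppr_le0; apply/ler_addgt0Pr => e e0.
have b1 : 0 < \tr W + 1 by rewrite ltr_wpDl.
have := Ae _ (divr_gt0 e0 b1).
have : e / (\tr W + 1) * \tr W <= e.
  by rewrite mulrAC ler_pdivrMr // mulrDr mulr1 lerDl ltW.
lra.
Qed.


Lemma mxtrace_sqr_gt0 n (P V : 'M[R]_n) :
  P^T = P -> posdefmx P -> V^T = V -> V != 0 -> 0 < \tr (P *m V *m P *m V).
Proof.
move=> sP pP sV V0; have [C eC] := cholesky sP pP.
have uC : C \in unitmx.
  by have := posdefmx_unit pP; rewrite eC unitmx_mul => /andP[].
have [i VCi0] : exists i, V *m col i C != 0.
  apply/existsP; apply: contraNT V0; rewrite negb_exists => /forallP VC0.
  have VC : V *m C = 0.
    apply/matrixP => a b; have /negPn/eqP/matrixP/(_ a 0) := VC0 b.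
    by rewrite colE mulmxA -colE !mxE.
  by rewrite -[V](mulmxK uC) VC mul0mx.
have qfVC j : qform (col j C) (V *m P *m V) = qform (V *m col j C) P.
  by rewrite -qform_mulmx sV.
have -> : P *m V *m P *m V = C *m C^T *m (V *m P *m V) by rewrite -eC !mulmxA.
rewrite mxtrace_gram (bigD1 i) //= ltr_wpDr ?qfVC ?pP //.
by apply: sumr_ge0 => j _; rewrite qfVC; apply: posdefmx_psd.
Qed.

Lemma mxtrace_sqr_le n (X Y V : 'M[R]_n) :
  X^T = X -> Y^T = Y -> V^T = V -> psdmx Y -> psdmx (X - Y) ->
  \tr (Y *m V *m Y *m V) <= \tr (X *m V *m X *m V).
Proof.
move=> sX sY sV pY pXY.
have pXDY : psdmx (X + Y).
  by rewrite -[X](subrK Y) -addrA; apply: psdmxD => //; apply: psdmxD.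
rewrite -subr_ge0.
have -> : \tr (X *m V *m X *m V) - \tr (Y *m V *m Y *m V) =
          \tr ((X - Y) *m (V *m (X + Y) *m V)).
  have cyc : \tr (Y *m V *m X *m V) = \tr (X *m V *m Y *m V).
    by rewrite -mulmxA mxtrace_mulC !mulmxA.
  rewrite mulmxBl !(mulmxDr, mulmxDl) linearB /= !mxtraceD !mulmxA cyc; lra.
apply: mxtrace_psd_ge0 => //; first by rewrite linearB /= sX sY.
by move=> u; rewrite -{1}sV qform_mulmx.
Qed.

Lemma qform_invmx_ge n (M : 'M[R]_n) (u z : 'cV[R]_n) : M^T = M -> posdefmx M ->
  2 * (z^T *m u) 0 0 - qform z M <= qform u (invmx M).
Proof.
move=> sM pM; have uM := posdefmx_unit pM.
have := posdefmx_psd pM (invmx M *m u - z).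
rewrite /qform [(_ - z)^T]linearB /= trmx_mul trmx_inv sM !mulmxBl !mulmxBr.
rewrite -[u^T *m invmx M *m M]mulmxA mulVmx // mulmx1 mulmxA.
rewrite -[z^T *m M *m (invmx M *m u)]mulmxA mulKVmx //.
have -> : u^T *m z = (z^T *m u)^T by rewrite trmx_mul trmxK.
set a := u^T *m invmx M *m u; set b := z^T *m u; set c := z^T *m M *m z.
rewrite !mxE; lra.
Qed.

Lemma psdmx_invmxB n (K M : 'M[R]_n) : K^T = K -> posdefmx K -> M^T = M -> psdmx M ->
  psdmx (invmx K - invmx (K + M)).
Proof.
move=> sK pK sM pM u; have sKM : (K + M)^T = K + M by rewrite linearD /= sK sM.
have uKM := posdefmx_unit (posdefmxDr pK pM).
set z := invmx (K + M) *m u.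
have zu : (z^T *m u) 0 0 = qform u (invmx (K + M)) by rewrite trmx_mul trmx_inv sKM.
have zKM : qform z (K + M) = qform u (invmx (K + M)).
  by rewrite -qform_mulmx trmx_inv sKM mulVmx ?mul1mx.
have := qform_invmx_ge u z sK pK; have := pM z.
rewrite qformB zu; rewrite qformD in zKM; lra.
Qed.

Lemma qform_invmx_drsub n1 n2 (M : 'M[R]_(n1 + n2)) (u : 'cV[R]_(n1 + n2)) :
  M^T = M -> posdefmx M -> qform (dsubmx u) (invmx (drsubmx M)) <= qform u (invmx M).
Proof.
move=> sM pM; set D := drsubmx M; set w := dsubmx u.
have qD v : qform (col_mx 0 v) M = qform v D.
  rewrite /qform -[M]submxK tr_col_mx trmx0 mul_row_block !mul0mx !add0r.
  by rewrite mul_row_col mulmx0 add0r.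
have sD : D^T = D by rewrite /D trmx_drsub sM.
have pD : posdefmx D.
  by move=> v v0; rewrite -qD pM // col_mx_eq0 negb_and v0 orbT.
have uD := posdefmx_unit pD; pose z : 'cV_(n1 + n2) := col_mx 0 (invmx D *m w).
have zu : (z^T *m u) 0 0 = qform w (invmx D).
  by rewrite -[u]vsubmxK tr_col_mx trmx0 mul_row_col mul0mx add0r trmx_mul trmx_inv sD.
have zM : qform z M = qform w (invmx D).
  by rewrite qD -qform_mulmx trmx_inv sD mulVmx ?mul1mx.
have := qform_invmx_ge u z sM pM; rewrite zu zM; lra.
Qed.

Lemma det_1D_mul_gt0 n (W P : 'M[R]_n) :
  W^T = W -> psdmx W -> P^T = P -> posdefmx P -> 0 < \det (1%:M + W *m P).
Proof.
move=> sW pW sP pP; have uP := posdefmx_unit pP.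
rewrite -[1%:M](mulVmx uP) -mulmxDl det_mulmx mulr_gt0 ?det_posdefmx_gt0 //.
  by rewrite linearD /= sW trmx_inv sP.
by apply: posdefmxDr pW; apply: posdefmx_inv.
Qed.

End PositiveMatrices.

Section Pencil.
Variable R : fieldType.

Definition pencil n (Y B : 'M[R]_n) : 'M[{poly R}]_n :=
  map_mx polyC Y + 'X *: map_mx polyC B.

Lemma horner_pencil n (Y B : 'M[R]_n) h :
  map_mx (horner_eval h) (pencil Y B) = Y + h *: B.
Proof. by apply/matrixP => i j; rewrite !mxE /= horner_evalE !hornerE. Qed.

Lemma horner_det_pencil n (Y B : 'M[R]_n) h : (\det (pencil Y B)).[h] = \det (Y + h *: B).
Proof. by rewrite -horner_evalE -det_map_mx horner_pencil. Qed.

Lemma coef01_prod_1DX (I : Type) (r : seq I) (c : I -> R) :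
  (\prod_(i <- r) (1 + 'X * (c i)%:P))`_0 = 1 /\
  (\prod_(i <- r) (1 + 'X * (c i)%:P))`_1 = \sum_(i <- r) c i.
Proof.
elim: r => [|x r [IH0 IH1]]; first by rewrite !big_nil !coef1.
rewrite !big_cons coef0M coefM big_ord_recr big_ord1 /= IH0 IH1 !coefD coefXM coef1.
by rewrite !coefC coefXM /= coefC /= addr0 add0r !mul1r mulr1 addrC.
Qed.

(* Only the identity permutation contributes to the coefficient of ['X]: any
   other one leaves at least two off-diagonal factors, each divisible by ['X]. *)
Lemma coef1_det_pencil1 n (C : 'M[R]_n) : (\det (pencil 1%:M C))`_1 = \tr C.
Proof.
have ME i j : pencil 1%:M C i j = (i == j)%:R + 'X * (C i j)%:P.
  by rewrite !mxE rmorphMn.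
rewrite /determinant coef_sum (bigD1 (1%g : 'S_n)) //= odd_perm1 expr0 mul1r.
rewrite (eq_bigr (fun i => 1 + 'X * (C i i)%:P)) => [|i _]; last by rewrite perm1 ME eqxx.
rewrite (coef01_prod_1DX _ (fun i => C i i)).2 [X in _ + X]big1 ?addr0 // => s s1.
have [i0 si0] : exists i0, s i0 != i0.
  apply/existsP; apply: contraNT s1; rewrite negb_exists => /forallP s_id.
  by apply/eqP/permP => i; rewrite perm1; apply/eqP/negPn.
have ssi0 : s (s i0) != s i0 by rewrite (inj_eq perm_inj).
rewrite (bigD1 i0) //= (bigD1 (s i0)) /=; last by rewrite si0.
rewrite !ME (eq_sym i0) (negbTE si0) (eq_sym (s i0)) (negbTE ssi0) !add0r.
set q := \prod_(i < n | _) _; set c := (-1) ^+ s.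
rewrite (_ : c * _ = 'X^2 * (c * (C i0 (s i0))%:P * (C (s i0) (s (s i0)))%:P * q)).
  by rewrite coefXnM.
by rewrite expr2; ring.
Qed.

Lemma coef1_det_pencil n (Y B : 'M[R]_n) : Y \in unitmx ->
  (\det (pencil Y B))`_1 = \det Y * \tr (invmx Y *m B).
Proof.
move=> uY; have -> : pencil Y B = map_mx polyC Y *m pencil 1%:M (invmx Y *m B).
  by rewrite /pencil map_mx1 mulmxDr mulmx1 -scalemxAr -map_mxM mulKVmx.
by rewrite det_mulmx det_map_mx coefCM coef1_det_pencil1.
Qed.

Lemma tr_invmx_pencil n (Y A D : 'M[R]_n) h : Y + h *: A \in unitmx ->
  \tr (invmx (Y + h *: A) *m D) =
  (\tr (\adj (pencil Y A) *m map_mx polyC D)).[h] / (\det (pencil Y A)).[h].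
Proof.
move=> u; rewrite horner_det_pencil /invmx u -scalemxAl mxtraceZ mulrC; congr (_ * _).
rewrite -horner_evalE -trace_map_mx map_mxM map_mx_adj horner_pencil.
by congr (\tr (_ *m _)); apply/matrixP => k l; rewrite !mxE /= horner_evalE hornerC.
Qed.

End Pencil.

Section LineDerivatives.
Local Open Scope classical_set_scope.
Variable R : realType.

Lemma diff_quot_along d (F : 'rV[R]_d -> R) w v :
  (fun h : R => h^-1 *: ((F \o shift w) (h *: v) - F w)) =
  (fun h : R => h^-1 *: (((fun k : R => F (k *: v + w)) \o shift 0) (h *: 1)
                         - (fun k : R => F (k *: v + w)) 0)).
Proof. by apply/funext => h /=; rewrite scale0r add0r addr0 scaler1. Qed.

Lemma derive_along d (F : 'rV[R]_d -> R) w v :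
  'D_v F w = 'D_1 (fun k : R => F (k *: v + w)) 0.
Proof. by rewrite /derive diff_quot_along. Qed.

Lemma is_derive_diff_quot (g : R -> R) (l : R) :
  (fun h => h^-1 * (g h - g 0)) @ 0^' --> l -> is_derive (0 : R) 1 g l.
Proof.
have qE : (fun h : R => h^-1 *: ((g \o shift 0) (h *: 1) - g 0)) =
    (fun h => h^-1 * (g h - g 0)).
  by apply/funext => h /=; rewrite addr0 scaler1.
move=> gl; have dg : derivable g 0 1 by rewrite /derivable qE; apply/cvg_ex; exists l.
by apply: DeriveDef => //; rewrite /derive qE; apply: cvg_lim.
Qed.

Lemma near0_horner_gt0 (p : {poly R}) : 0 < p.[0] -> \forall h \near (0 : R), 0 < p.[h].
Proof. by move=> p0; apply: (cvgr_gt _ (@continuous_horner R p 0) _ p0). Qed.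

Lemma near0_horner_neq0 (p : {poly R}) : p.[0] != 0 -> \forall h \near (0 : R), p.[h] != 0.
Proof. by move=> p0; apply: (cvgr_neq0 _ (@continuous_horner R p 0) p0). Qed.

Lemma is_derive_ln_det n (Y B : 'M[R]_n) : 0 < \det Y ->
  is_derive (0 : R) 1 (fun k => ln (\det (Y + k *: B))) (\tr (invmx Y *m B)).
Proof.
move=> Y0; have p0 : (\det (pencil Y B)).[0] = \det Y.
  by rewrite horner_det_pencil scale0r addr0.
have -> : (fun k => ln (\det (Y + k *: B))) = (@ln R) \o horner (\det (pencil Y B)).
  by apply/funext => k /=; rewrite horner_det_pencil.
have p0_gt0 : 0 < (\det (pencil Y B)).[0] by rewrite p0.
apply: is_derive_eq; first exact: is_derive1_comp (is_derive1_ln p0_gt0) (is_derive_poly _ _).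
rewrite p0 horner_coef0 coef_deriv mulr1n coef1_det_pencil ?unitmxE ?unitfE ?gt_eqF //.
by rewrite mulrA mulVf ?mul1r // gt_eqF.
Qed.

Lemma invmxDZ_subr n (Y A : 'M[R]_n) h : Y \in unitmx -> Y + h *: A \in unitmx ->
  invmx (Y + h *: A) - invmx Y = - h *: (invmx (Y + h *: A) *m A *m invmx Y).
Proof.
move=> uY uYA; have -> : invmx (Y + h *: A) - invmx Y =
    invmx (Y + h *: A) *m (Y - (Y + h *: A)) *m invmx Y.
  by rewrite mulmxBr mulmxBl -mulmxA mulmxV // mulmx1 mulVmx // mul1mx.
by rewrite opprD addrA subrr add0r mulmxN mulNmx -scalemxAr -scalemxAl scaleNr.
Qed.

(* The difference quotient is [- tr (invmx (Y + h A) D)], a rational function of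
   [h] by the adjugate formula, hence continuous at [0]. *)
Lemma is_derive_tr_invmx n (Y A C : 'M[R]_n) : Y \in unitmx ->
  is_derive (0 : R) 1 (fun h => \tr (invmx (Y + h *: A) *m C))
    (- \tr (invmx Y *m A *m invmx Y *m C)).
Proof.
move=> uY; set D := A *m invmx Y *m C.
set p := \det (pencil Y A); set q := \tr (\adj (pencil Y A) *m map_mx polyC D).
have Y0 : Y + 0 *: A = Y by rewrite scale0r addr0.
have p0 : p.[0] != 0 by rewrite /p horner_det_pencil Y0 -unitfE -unitmxE.
have nearU : \forall h \near (0 : R), Y + h *: A \in unitmx.
  by apply: filterS (near0_horner_neq0 p0) => h; rewrite /p horner_det_pencil unitmxE unitfE.
have quotE h : h != 0 -> Y + h *: A \in unitmx ->
    h^-1 * (\tr (invmx (Y + h *: A) *m C) - \tr (invmx (Y + 0 *: A) *m C)) = - (q.[h] / p.[h]).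
  move=> h0 uh; rewrite Y0 -tr_invmx_pencil // -linearB /= -mulmxBl invmxDZ_subr //.
  by rewrite -scalemxAl linearZ /= /D !mulmxA mulrA mulrN mulVf // mulN1r.
have -> : - \tr (invmx Y *m A *m invmx Y *m C) = - (q.[0] / p.[0]).
  by rewrite -tr_invmx_pencil Y0 // /D !mulmxA.
apply: is_derive_diff_quot.
have qp : (fun h : R => - (q.[h] / p.[h])) @ 0^' --> - (q.[0] / p.[0]).
  apply: cvg_within_filter; apply: cvgN; apply: cvgM; first exact: continuous_horner.
  by apply: cvgV => //; exact: continuous_horner.
apply: cvg_trans qp; apply: near_eq_cvg; near=> h; rewrite quotE //.
  by near: h; exact: nbhs_dnbhs_neq.
by near: h; apply: cvg_within; exact: nearU.
Unshelve. all: by end_near.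
Qed.

End LineDerivatives.

Section HessianForms.
Local Open Scope classical_set_scope.
Variable R : realType.

(* Only second derivatives along lines through [z] are required, since [hessian]
   is built from iterated directional derivatives. *)
Definition is_hessian d (F : 'rV[R]_d -> R) (z : 'rV[R]_d)
    (Q : 'rV[R]_d -> 'rV[R]_d -> R) :=
  bilinear_for *%R *%R Q /\ forall u v : 'rV[R]_d,
    (\forall h \near (0 : R), derivable (fun k : R => F (k *: v + (h *: u + z))) 0 1) /\
    is_derive (0 : R) 1 (fun h : R => 'D_1 (fun k : R => F (k *: v + (h *: u + z))) 0) (Q u v).

Lemma bilinear_forP d (Q : 'rV[R]_d -> 'rV[R]_d -> R) :
  bilinear_for *%R *%R Q <->
  (forall a u1 u2 v, Q (a *: u1 + u2) v = a * Q u1 v + Q u2 v) /\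
  (forall a u v1 v2, Q u (a *: v1 + v2) = a * Q u v1 + Q u v2).
Proof. by split=> -[QL QR]; split=> w a x y; [exact: QL|exact: QR|exact: QL|exact: QR]. Qed.

Lemma is_hessianD d (F G : 'rV[R]_d -> R) z QF QG :
  is_hessian F z QF -> is_hessian G z QG ->
  is_hessian (fun x => F x + G x) z (fun u v => QF u v + QG u v).
Proof.
move=> [/bilinear_forP[FL FR] hF] [/bilinear_forP[GL GR] hG]; split.
  by apply/bilinear_forP; split=> *; rewrite ?FL ?GL ?FR ?GR; ring.
move=> u v; have [nF dF] := hF u v; have [nG dG] := hG u v; split.
  by apply: filterS2 nF nG => h; apply: derivableD.
apply: near_eq_is_derive (is_deriveD dF dG).
by apply: filterS2 nF nG => h dFh dGh; rewrite deriveD.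
Qed.

Lemma is_hessianZ d (F : 'rV[R]_d -> R) z Q (c : R) :
  is_hessian F z Q -> is_hessian (fun x => c * F x) z (fun u v => c * Q u v).
Proof.
move=> [/bilinear_forP[QL QR] hF]; split.
  by apply/bilinear_forP; split=> *; rewrite ?QL ?QR; ring.
move=> u v; have [nF dF] := hF u v; split.
  by apply: filterS nF => h; apply: derivableZ.
apply: near_eq_is_derive (is_deriveZ c dF).
by apply: filterS nF => h dFh; rewrite deriveZ.
Qed.

Lemma is_hessianN d (F : 'rV[R]_d -> R) z Q :
  is_hessian F z Q -> is_hessian (fun x => - F x) z (fun u v => - Q u v).
Proof.
move=> [/bilinear_forP[QL QR] hF]; split.
  by apply/bilinear_forP; split=> *; rewrite ?QL ?QR; ring.
move=> u v; have [nF dF] := hF u v; split.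
  by apply: filterS nF => h; apply: derivableN.
apply: near_eq_is_derive (is_deriveN dF).
by apply: filterS nF => h dFh; rewrite deriveN.
Qed.

Lemma is_hessianB d (F G : 'rV[R]_d -> R) z QF QG :
  is_hessian F z QF -> is_hessian G z QG ->
  is_hessian (fun x => F x - G x) z (fun u v => QF u v - QG u v).
Proof. by move=> hF hG; apply: is_hessianD hF (is_hessianN hG). Qed.

Lemma is_hessian_cst d (c : R) (z : 'rV[R]_d) : is_hessian (fun=> c) z (fun _ _ => 0).
Proof.
split; first by apply/bilinear_forP; split=> *; rewrite mulr0 addr0.
move=> u v; split; first by near=> h; apply: derivable_cst.
under eq_fun => h do rewrite derive_cst.
exact: is_derive_cst.
Unshelve. all: by end_near.
Qed.

Lemma is_hessian_sum d J (F : 'I_J -> 'rV[R]_d -> R) z Q :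
  (forall j, is_hessian (F j) z (Q j)) ->
  is_hessian (fun x => \sum_(j < J) F j x) z (fun u v => \sum_(j < J) Q j u v).
Proof.
elim: J F Q => [|J IH] F Q hF.
  under eq_fun => x do rewrite big_ord0.
  have -> : (fun u v => \sum_(j < 0) Q j u v) = fun _ _ => 0.
    by apply/funext => u; apply/funext => v; rewrite big_ord0.
  exact: is_hessian_cst.
under eq_fun => x do rewrite big_ord_recr.
have -> : (fun u v => \sum_(j < J.+1) Q j u v) =
    fun u v => \sum_(j < J) Q (widen_ord (leqnSn J) j) u v + Q ord_max u v.
  by apply/funext => u; apply/funext => v; rewrite big_ord_recr.
by apply: is_hessianD; [apply: IH => j; apply: hF | apply: hF].
Qed.

Lemma is_hessian_eq_near d (F G : 'rV[R]_d -> R) z Q :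
  (forall u v, \forall h \near (0 : R), \forall k \near (0 : R),
      F (k *: v + (h *: u + z)) = G (k *: v + (h *: u + z))) ->
  is_hessian G z Q -> is_hessian F z Q.
Proof.
move=> FG [bQ hG]; split=> // u v; have [nG dG] := hG u v.
have nFG := FG u v; split.
  apply: filterS2 nG nFG => h dGh FGh; apply: near_eq_derivable dGh.
  by apply: filterS FGh => k ->.
apply: near_eq_is_derive dG; apply: filterS2 nG nFG => h dGh FGh.
by apply: near_eq_derive; apply: filterS FGh => k ->.
Qed.

Lemma near0_det_pencil_gt0 n (Y B : 'M[R]_n) : 0 < \det Y ->
  \forall h \near (0 : R), 0 < \det (Y + h *: B).
Proof.
move=> Y0; have := @near0_horner_gt0 _ (\det (pencil Y B)).
rewrite horner_det_pencil scale0r addr0 => /(_ Y0).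
by apply: filterS => h; rewrite horner_det_pencil.
Qed.

Lemma near_det_along_gt0 d n (Y0 : 'M[R]_n) (f : 'rV[R]_d -> 'M[R]_n) z :
  linear f -> 0 < \det (Y0 + f z) -> forall u v,
  \forall h \near (0 : R), \forall k \near (0 : R), 0 < \det (Y0 + f (k *: v + (h *: u + z))).
Proof.
move=> lf Yz u v; apply: filterS (near0_det_pencil_gt0 (f u) Yz) => h Yh.
apply: filterS (near0_det_pencil_gt0 (f v) Yh) => k.
by rewrite !lf; congr (0 < \det _); apply/matrixP => i j; rewrite !mxE; ring.
Qed.

Lemma is_hessian_ln_det d n (Y0 : 'M[R]_n) (f : 'rV[R]_d -> 'M[R]_n) z :
  linear f -> 0 < \det (Y0 + f z) ->
  is_hessian (fun w => ln (\det (Y0 + f w))) z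
    (fun u v => - \tr (invmx (Y0 + f z) *m f u *m invmx (Y0 + f z) *m f v)).
Proof.
move=> lf Yz; set Y := Y0 + f z; split.
  apply/bilinear_forP; split=> a u1 u2 v; rewrite lf.
    by rewrite !(mulmxDr, mulmxDl) -!scalemxAr -!scalemxAl mxtraceD mxtraceZ; ring.
  by rewrite !(mulmxDr, mulmxDl) -!scalemxAr mxtraceD mxtraceZ; ring.
move=> u v; have uY : Y \in unitmx by rewrite unitmxE unitfE gt_eqF.
have lnE h : (fun k => ln (\det (Y0 + f (k *: v + (h *: u + z))))) =
    fun k => ln (\det (Y + h *: f u + k *: f v)).
  apply/funext => k; congr (ln (\det _)).
  by rewrite !lf; apply/matrixP => i j; rewrite !mxE; ring.
have dlnE h : 0 < \det (Y + h *: f u) ->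
    is_derive (0 : R) 1 (fun k => ln (\det (Y0 + f (k *: v + (h *: u + z)))))
      (\tr (invmx (Y + h *: f u) *m f v)).
  by move=> Yh; rewrite lnE; apply: is_derive_ln_det.
have nY := near0_det_pencil_gt0 (f u) Yz; split.
  by apply: filterS nY => h /dlnE [].
apply: near_eq_is_derive (is_derive_tr_invmx _ _ uY).
by apply: filterS nY => h /dlnE [_ ->].
Qed.

Lemma is_hessian_ln_det_linear d n (f : 'rV[R]_d -> 'M[R]_n) z :
  linear f -> 0 < \det (f z) ->
  is_hessian (fun w => ln (\det (f w))) z
    (fun u v => - \tr (invmx (f z) *m f u *m invmx (f z) *m f v)).
Proof.
move=> lf fz; rewrite -[f z]add0r.
have -> : (fun w => ln (\det (f w))) = fun w => ln (\det (0 + f w)).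
  by apply/funext => w; rewrite add0r.
by apply: is_hessian_ln_det; rewrite ?add0r.
Qed.

Lemma is_hessian_ln d (c : R) (g : 'rV[R]_d -> R) z : scalar g -> 0 < c + g z ->
  is_hessian (fun w => ln (c + g w)) z (fun u v => - (g u * g v) / (c + g z) ^+ 2).
Proof.
move=> lg cg; pose f w : 'M[R]_1 := (g w)%:M.
have lf : linear f by move=> a u w; rewrite /f lg raddfD /= scale_scalar_mx.
have detE w : \det (c%:M + f w) = c + g w by rewrite -raddfD det_scalar1.
have -> : (fun w => ln (c + g w)) = fun w => ln (\det (c%:M + f w)).
  by apply/funext => w; rewrite detE.
suff -> : (fun u v => - (g u * g v) / (c + g z) ^+ 2) =
    fun u v => - \tr (invmx (c%:M + f z) *m f u *m invmx (c%:M + f z) *m f v).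
  by apply: is_hessian_ln_det; rewrite ?detE.
apply/funext => u; apply/funext => v.
rewrite /f -raddfD invmx_scalar -!scalar_mxM mxtrace_scalar mulr1n.
by field; rewrite gt_eqF.
Qed.

Lemma hessian_is_hessian d (F : 'rV[R]_d -> R) z Q : is_hessian F z Q ->
  hessian F z = \matrix_(a, b) Q (delta_mx 0 a) (delta_mx 0 b).
Proof.
move=> [_ hF]; apply/matrixP => a b; rewrite !mxE derive_along.
under eq_fun => h do rewrite derive_along.
by have [_ [_ ->]] := hF (delta_mx 0 a) (delta_mx 0 b).
Qed.

Lemma bilinear_form_mx d (Q : 'rV[R]_d -> 'rV[R]_d -> R) (v : 'rV[R]_d) :
  bilinear_for *%R *%R Q ->
  (v *m (\matrix_(a, b) Q (delta_mx 0 a) (delta_mx 0 b)) *m v^T) 0 0 = Q v v.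
Proof.
move=> /bilinear_forP[QL QR].
have QsumL (I : Type) (r : seq I) (c : I -> R) (u : I -> 'rV_d) w :
    Q (\sum_(i <- r) c i *: u i) w = \sum_(i <- r) c i * Q (u i) w.
  elim: r => [|i r IH]; last by rewrite !big_cons QL IH.
  by rewrite !big_nil; have := QL 1 0 0 w; rewrite scale1r addr0 mul1r; lra.
have QsumR (I : Type) (r : seq I) (c : I -> R) (u : I -> 'rV_d) w :
    Q w (\sum_(i <- r) c i *: u i) = \sum_(i <- r) c i * Q w (u i).
  elim: r => [|i r IH]; last by rewrite !big_cons QR IH.
  by rewrite !big_nil; have := QR 1 w 0 0; rewrite scale1r addr0 mul1r; lra.
rewrite {3 4}[v]row_sum_delta QsumL -mulmxA mxE; apply: eq_bigr => a _.
by rewrite QsumR mxE; congr (_ * _); apply: eq_bigr => b _; rewrite !mxE mulrC.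
Qed.

Lemma det_hessian_neq0 d (F : 'rV[R]_d -> R) z Q : is_hessian F z Q ->
  (forall v, v != 0 -> Q v v != 0) -> \det (hessian F z) != 0.
Proof.
move=> hF Qnd; apply/negP => /det0P [v v0 vH].
have := bilinear_form_mx v hF.1; rewrite -(hessian_is_hessian hF) vH mul0mx mxE => Q0.
by have := Qnd v v0; rewrite -Q0 eqxx.
Qed.

End HessianForms.

Lemma mem_lowpairs m (p : 'I_m * 'I_m) : (p \in lowpairs m) = (p.2 <= p.1)%N.
Proof.
apply/idP/idP.
  by case/allpairsPdep => j [i [_ + ->]]; rewrite mem_filter => /andP[].
case: p => i j /= ji; apply/allpairsPdep; exists j, i.
by rewrite mem_enum mem_filter mem_enum ji.
Qed.

Lemma uniq_lowpairs m : uniq (lowpairs m).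
Proof.
apply: allpairs_uniq_dep => [|j _|[i1 j1] [i2 j2] _ _ /= [-> ->]] //; first exact: enum_uniq.
by apply: filter_uniq; apply: enum_uniq.
Qed.

Section HalfVectorization.
Variable R : realType.

Lemma Rmat_sym m (x : 'rV[R]_(nx m)) : (Rmat x)^T = Rmat x.
Proof.
apply/matrixP => i j; rewrite !mxE; apply: eq_bigr => k _.
by rewrite (set_nth_default (i, j) (j, i)) 1?orbC // ltn_ord.
Qed.

Lemma linear_Rmat m : linear (@Rmat R m).
Proof.
move=> a u w; apply/matrixP => i j; rewrite !mxE mulr_sumr -big_split /=.
by apply: eq_bigr => k _; case: ifP => _; rewrite ?mxE ?mulr0 ?addr0.
Qed.

Lemma Rmat_nth m (x : 'rV[R]_(nx m)) (k : 'I_(nx m)) p0 :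
  Rmat x (nth p0 (lowpairs m) k).1 (nth p0 (lowpairs m) k).2 = x 0 k.
Proof.
set p := nth p0 (lowpairs m) k; have pE : (p.1, p.2) = p by case: (p).
have nthK (k' : 'I_(nx m)) : nth p0 (lowpairs m) k' = p -> k' = k.
  by move=> /eqP; rewrite /p nth_uniq ?ltn_ord ?uniq_lowpairs // => /eqP; apply: val_inj.
have swapE : (p.2, p.1) \in lowpairs m -> (p.2, p.1) = p.
  have : p \in lowpairs m by apply: mem_nth.
  rewrite !mem_lowpairs /= => p21 p12.
  have e : p.1 = p.2 by apply/val_inj/eqP; rewrite eqn_leq p12.
  by rewrite -[RHS]pE e.
rewrite mxE (bigD1 k) //= big1 => [|k' k'k]; rewrite (set_nth_default p0) ?ltn_ord //.
  by rewrite pE eqxx addr0.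
case: ifP => // /orP[/eqP pk'|/eqP pk'].
  by rewrite pE in pk'; rewrite (nthK _ pk') eqxx in k'k.
have pk'' : nth p0 (lowpairs m) k' = p by rewrite pk' swapE // -pk' mem_nth.
by rewrite (nthK _ pk'') eqxx in k'k.
Qed.

Lemma veh_nth m (A : 'M[R]_m) (k : 'I_(nx m)) p0 :
  veh A 0 k = A (nth p0 (lowpairs m) k).1 (nth p0 (lowpairs m) k).2.
Proof.
rewrite mxE; under eq_bigr => i _ do under eq_bigr => j _ do
  rewrite (set_nth_default p0 (i, j) (ltn_ord k)).
case: (nth p0 (lowpairs m) k) => i0 j0 /=.
rewrite (bigD1 i0) //= (bigD1 j0) //= eqxx big1 ?addr0 => [|j j0j]; last first.
  by rewrite xpair_eqE eqxx eq_sym (negbTE j0j).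
rewrite big1 ?addr0 // => i i0i; apply: big1 => j _.
by rewrite xpair_eqE eq_sym (negbTE i0i).
Qed.

Lemma Rmat_veh m (A : 'M[R]_m) : A^T = A -> Rmat (veh A) = A.
Proof.
move=> sA; have low (i j : 'I_m) : (j <= i)%N -> Rmat (veh A) i j = A i j.
  move=> ji; have ijP : (i, j) \in lowpairs m by rewrite mem_lowpairs.
  have kP : (index (i, j) (lowpairs m) < nx m)%N by rewrite index_mem.
  have := Rmat_nth (veh A) (Ordinal kP) (i, j); rewrite nth_index //= => ->.
  by rewrite (veh_nth A (Ordinal kP) (i, j)) /= nth_index.
apply/matrixP => i j; have [/low //|/ltnW/low ij] := leqP j i.
by rewrite -[Rmat _]Rmat_sym mxE ij -{1}sA mxE.
Qed.

Lemma Rmat_eq0 m (x : 'rV[R]_(nx m)) : Rmat x = 0 -> x = 0.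
Proof.
move=> x0; apply/rowP => k; have [p0 _] : exists p0 : 'I_m * 'I_m, True.
  have : (0 < size (lowpairs m))%N := leq_ltn_trans (leq0n k) (ltn_ord k).
  by case: (lowpairs m) => [|p0 _] //; exists p0.
by rewrite -(Rmat_nth x k p0) x0 !mxE.
Qed.

End HalfVectorization.

Section KMatrix.
Variable R : realType.

Definition offdiag_block n1 n2 (N : 'M[R]_(n1, n2)) : 'M[R]_(n1 + n2) := block_mx 0 N N^T 0.

Lemma Kmat_offdiag n1 n2 (N : 'M[R]_(n1, n2)) : Kmat N = 1%:M + offdiag_block N.
Proof.
by rewrite /Kmat /offdiag_block (scalar_mx_block n1 n2 1) add_block_mx !addr0 !add0r.
Qed.

Lemma offdiag_block_sym n1 n2 (N : 'M[R]_(n1, n2)) : (offdiag_block N)^T = offdiag_block N.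
Proof. by rewrite /offdiag_block tr_block_mx trmxK !trmx0. Qed.

Lemma Kmat_sym n1 n2 (N : 'M[R]_(n1, n2)) : (Kmat N)^T = Kmat N.
Proof. by rewrite Kmat_offdiag linearD /= offdiag_block_sym trmx1. Qed.

Lemma drsubmx_Kmat n1 n2 (N : 'M[R]_(n1, n2)) : drsubmx (Kmat N) = 1%:M.
Proof. exact: block_mxKdr. Qed.

Lemma Nmat_vecN n1 n2 (N : 'M[R]_(n1, n2)) : Nmat (vecN N) = N.
Proof. by rewrite /Nmat /vecN mxvecK trmxK. Qed.

Lemma linear_offdiag_Nmat n1 n2 :
  linear (fun y : 'rV[R]_(n2 * n1) => offdiag_block (Nmat y)).
Proof.
move=> a u w; have -> : Nmat (a *: u + w) = a *: Nmat u + Nmat w.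
  by apply/matrixP => i j; rewrite !mxE.
by rewrite /offdiag_block scale_block_mx add_block_mx linearD linearZ /= !scaler0 !addr0.
Qed.

Lemma offdiag_Nmat_eq0 n1 n2 (y : 'rV[R]_(n2 * n1)) : offdiag_block (Nmat y) = 0 -> y = 0.
Proof.
rewrite /offdiag_block -block_mx0 => /eq_block_mx [_ Ny0 _ _].
by rewrite -[y]vec_mxK -[vec_mx y]trmxK -/(Nmat y) Ny0 trmx0 linear0.
Qed.

End KMatrix.

Section CurvatureOfF.
Variable R : realType.

Lemma psdmx_conj_invmx_drsub m n1 n2 (H1 : 'M[R]_(n1, m)) (H2 : 'M[R]_(n2, m))
    (K : 'M[R]_(n1 + n2)) (Rm : 'M[R]_m) :
  K^T = K -> posdefmx K -> drsubmx K = 1%:M -> Rm^T = Rm -> psdmx Rm ->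
  psdmx ((Hmat H1 H2)^T *m invmx (K + Hmat H1 H2 *m Rm *m (Hmat H1 H2)^T) *m Hmat H1 H2
         - H2^T *m invmx (1%:M + H2 *m Rm *m H2^T) *m H2).
Proof.
move=> sK pK K22 sR pR u; set H := Hmat H1 H2.
have sM : (K + H *m Rm *m H^T)^T = K + H *m Rm *m H^T.
  by rewrite linearD /= sK !trmx_mul trmxK sR mulmxA.
have pM := posdefmxDr pK (psdmx_conj H pR).
rewrite qformB !qform_mulmx subr_ge0.
have -> : 1%:M + H2 *m Rm *m H2^T = drsubmx (K + H *m Rm *m H^T).
  rewrite /H /Hmat -[K]submxK tr_col_mx mul_col_mx mul_col_row add_block_mx.
  by rewrite block_mxKdr K22.
have -> : H2 *m u = dsubmx (H *m u) by rewrite /H /Hmat mul_col_mx col_mxKd.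
exact: qform_invmx_drsub.
Qed.

Lemma f_concave_in_R m n1 n2 (H1 : 'M[R]_(n1, m)) (H2 : 'M[R]_(n2, m))
    (K : 'M[R]_(n1 + n2)) (Rm : 'M[R]_m) :
  K^T = K -> posdefmx K -> drsubmx K = 1%:M -> Rm^T = Rm -> posdefmx Rm ->
  exists2 Q, is_hessian (fun x => f H1 H2 (Rmat x) K) (veh Rm) Q & forall v, Q v v <= 0.
Proof.
move=> sK pK K22 sR pR; rewrite /f /=; set H := Hmat H1 H2.
set M := K + H *m Rm *m H^T; set M2 := 1%:M + H2 *m Rm *m H2^T.
have sM : M^T = M by rewrite linearD /= sK !trmx_mul trmxK sR mulmxA.
have sM2 : M2^T = M2 by rewrite linearD /= trmx1 !trmx_mul trmxK sR mulmxA.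
have pM : posdefmx M := posdefmxDr pK (psdmx_conj H (posdefmx_psd pR)).
have pM2 : posdefmx M2 := posdefmxDr (@posdefmx1 _ _) (psdmx_conj H2 (posdefmx_psd pR)).
have uK := posdefmx_unit pK; have uM := posdefmx_unit pM; have uM2 := posdefmx_unit pM2.
set X1 := H^T *m invmx M *m H; set X2 := H2^T *m invmx M2 *m H2.
have pX2 : psdmx X2 by move=> u; rewrite qform_mulmx; apply/posdefmx_psd/posdefmx_inv.
have pX12 : psdmx (X1 - X2) := psdmx_conj_invmx_drsub H1 H2 sK pK K22 sR (posdefmx_psd pR).
pose fK x := invmx K *m H *m Rmat x *m H^T; pose f2 x := H2^T *m H2 *m Rmat x.
have lfK : linear fK := linear_mulmxr _ (linear_mulmxl _ (@linear_Rmat R m)).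
have lf2 : linear f2 := linear_mulmxl _ (@linear_Rmat R m).
have fKz : fK (veh Rm) = invmx K *m (H *m Rm *m H^T) by rewrite /fK Rmat_veh // !mulmxA.
have pW2 : psdmx (H2^T *m H2).
  by move=> u; rewrite -[H2^T]mulmx1 qform_mulmx; apply/posdefmx_psd/posdefmx1.
have d2 : 0 < \det (1%:M + f2 (veh Rm)).
  by rewrite /f2 Rmat_veh // det_1D_mul_gt0 // trmx_mul trmxK.
have dK : 0 < \det (1%:M + fK (veh Rm)).
  by rewrite fKz det_1D_invmx_mul // divr_gt0 ?det_posdefmx_gt0.
eexists; first exact (is_hessianB (is_hessian_ln_det lfK dK) (is_hessian_ln_det lf2 d2)).
have E2 : invmx (1%:M + H2^T *m H2 *m Rm) *m H2^T = H2^T *m invmx M2.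
  rewrite -mulmxA invmx_push_through ?mulmxA // unitmxE unitfE gt_eqF //.
  by move: d2; rewrite /f2 Rmat_veh // mulmxA.
move=> v /=.
have PKE : invmx (1%:M + fK (veh Rm)) *m fK v = invmx M *m H *m Rmat v *m H^T.
  by rewrite /fK Rmat_veh // -(invmx_1D_invmx_mul uK uM) !mulmxA.
have P2E : invmx (1%:M + f2 (veh Rm)) *m f2 v = X2 *m Rmat v.
  by rewrite /f2 Rmat_veh // !mulmxA E2.
rewrite -[_ *m _ *m fK v]mulmxA -[_ *m _ *m f2 v]mulmxA PKE P2E.
have -> : \tr (invmx M *m H *m Rmat v *m H^T *m (invmx M *m H *m Rmat v *m H^T)) =
    \tr (X1 *m Rmat v *m X1 *m Rmat v).
  by rewrite !mulmxA mxtrace_mulC /X1 !mulmxA.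
rewrite [X2 *m _ *m _]mulmxA opprK addrC subr_le0 mxtrace_sqr_le ?Rmat_sym //.
  by rewrite /X1 !trmx_mul trmxK trmx_inv sM mulmxA.
by rewrite /X2 !trmx_mul trmxK trmx_inv sM2 mulmxA.
Qed.

Lemma f_convex_in_K m n1 n2 (H1 : 'M[R]_(n1, m)) (H2 : 'M[R]_(n2, m))
    (Rm : 'M[R]_m) (N : 'M[R]_(n1, n2)) :
  Rm^T = Rm -> posdefmx Rm -> posdefmx (Kmat N) ->
  exists2 Q, is_hessian (fun y => f H1 H2 Rm (Kmat (Nmat y))) (vecN N) Q & forall v, 0 <= Q v v.
Proof.
move=> sR pR pK; rewrite /f /=; set H := Hmat H1 H2; set K := Kmat N.
have sK : K^T = K := Kmat_sym N.
set X := H *m Rm *m H^T.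
have sX : X^T = X by rewrite !trmx_mul trmxK sR mulmxA.
have pX : psdmx X := psdmx_conj H (posdefmx_psd pR).
pose g y := offdiag_block (Nmat y : 'M[R]_(n1, n2)).
have lg : linear g := @linear_offdiag_Nmat R n1 n2.
have gz : 1%:M + g (vecN N) = K by rewrite /g Nmat_vecN -Kmat_offdiag.
have gzX : 1%:M + X + g (vecN N) = K + X by rewrite addrAC gz.
have dK : 0 < \det (1%:M + g (vecN N)) by rewrite gz det_posdefmx_gt0.
have sKX : (K + X)^T = K + X by rewrite linearD /= sK sX.
have pKX : posdefmx (K + X) := posdefmxDr pK pX.
have dKX : 0 < \det (1%:M + X + g (vecN N)) by rewrite gzX det_posdefmx_gt0.
eexists.
  apply: is_hessian_eq_near (is_hessianB (is_hessianB (is_hessian_ln_det lg dKX)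
    (is_hessian_ln_det lg dK)) (is_hessian_cst (ln (\det (1%:M + H2^T *m H2 *m Rm))) _)) => u v.
  apply: filterS2 (near_det_along_gt0 lg dK u v) (near_det_along_gt0 lg dKX u v) => h.
  apply: filterS2 => k; set y := k *: v + _ => Ky KXy.
  have uKy : 1%:M + g y \in unitmx by rewrite unitmxE unitfE gt_eqF.
  rewrite Kmat_offdiag -/(g y).
  have -> : invmx (1%:M + g y) *m H *m Rm *m H^T = invmx (1%:M + g y) *m X.
    by rewrite /X !mulmxA.
  by rewrite det_1D_invmx_mul // (addrAC 1%:M (g y) X) ln_div ?posrE // divr_gt0.
move=> v /=; rewrite gz gzX subr0 opprK addrC subr_ge0 mxtrace_sqr_le //.
- by rewrite trmx_inv sK.
- by rewrite trmx_inv sKX.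
- exact: offdiag_block_sym.
- exact/posdefmx_psd/posdefmx_inv.
exact: psdmx_invmxB.
Qed.

End CurvatureOfF.

Section BarrierProblem.
Variables (R : realType) (m n1 n2 J : nat) (n3 : 'I_J -> nat).
Variables (H1 : 'M[R]_(n1, m)) (H2 : 'M[R]_(n2, m)) (H3 : forall j : 'I_J, 'M[R]_(n3 j, m)).
Variables (PT : R) (PI : 'I_J -> R) (t : R) (Rm : 'M[R]_m) (N : 'M[R]_(n1, n2)).
Hypotheses (t_gt0 : 0 < t) (sR : Rm^T = Rm) (pR : posdefmx Rm) (pK : posdefmx (Kmat N)).

Lemma ft_concave_in_R :
  \tr Rm < PT -> (forall j, \tr ((H3 j)^T *m H3 j *m Rm) < PI j) ->
  exists2 Q, is_hessian (fun x => ft H1 H2 H3 PT PI t (Rmat x) (Kmat N)) (veh Rm) Q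
    & forall v, v != 0 -> Q v v < 0.
Proof.
move=> RT RI.
have [Qf hf Qf_le0] := f_concave_in_R H1 H2 (Kmat_sym N) pK (drsubmx_Kmat N) sR pR.
have RE := Rmat_veh sR; have lR := @linear_Rmat R m.
have ltr : scalar (fun x : 'rV[R]_(nx m) => - \tr (Rmat x)).
  by move=> a u w /=; rewrite lR mxtraceD mxtraceZ; ring.
have ltrj j : scalar (fun x : 'rV[R]_(nx m) => - \tr ((H3 j)^T *m H3 j *m Rmat x)).
  by move=> a u w /=; rewrite lR mulmxDr -scalemxAr mxtraceD mxtraceZ; ring.
have dR : 0 < \det (Rmat (veh Rm)) by rewrite RE det_posdefmx_gt0.
have dT : 0 < PT + - \tr (Rmat (veh Rm)) by rewrite RE subr_gt0.
have dI j : 0 < PI j + - \tr ((H3 j)^T *m H3 j *m Rmat (veh Rm)) by rewrite RE subr_gt0.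
eexists.
  exact: is_hessianB (is_hessianD (is_hessianD (is_hessianD hf
    (is_hessianZ t^-1 (is_hessian_ln_det_linear lR dR)))
    (is_hessianZ t^-1 (is_hessian_ln ltr dT)))
    (is_hessian_sum (fun j => is_hessianZ t^-1 (is_hessian_ln (ltrj j) (dI j)))))
    (is_hessian_cst _ _).
move=> v v0 /=; rewrite RE.
have QR : 0 < \tr (invmx Rm *m Rmat v *m invmx Rm *m Rmat v).
  apply: mxtrace_sqr_gt0; rewrite ?trmx_inv ?sR ?Rmat_sym //; first exact: posdefmx_inv.
  by apply: contra v0 => /eqP /Rmat_eq0 ->.
have QT : 0 <= t^-1 * ((- \tr (Rmat v) * - \tr (Rmat v)) / (PT + - \tr Rm) ^+ 2).
  by apply: mulr_ge0; [rewrite invr_ge0 ltW | apply: divr_ge0; rewrite -?expr2 sqr_ge0].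
have QI : \sum_(j < J) t^-1 * (- (- \tr ((H3 j)^T *m H3 j *m Rmat v) *
   - \tr ((H3 j)^T *m H3 j *m Rmat v)) / (PI j + - \tr ((H3 j)^T *m H3 j *m Rm)) ^+ 2) <= 0.
  apply: sumr_le0 => j _; rewrite mulNr mulrN oppr_le0.
  by apply: mulr_ge0; [rewrite invr_ge0 ltW | apply: divr_ge0; rewrite -?expr2 sqr_ge0].
have tV : 0 < t^-1 by rewrite invr_gt0.
have := Qf_le0 v; have := mulr_gt0 tV QR.
rewrite !mulrN !mulNr; lra.
Qed.

Lemma ft_convex_in_K :
  exists2 Q, is_hessian (fun y => ft H1 H2 H3 PT PI t Rm (Kmat (Nmat y))) (vecN N) Q
    & forall v, v != 0 -> 0 < Q v v.
Proof.
have [Qf hf Qf_ge0] := f_convex_in_K H1 H2 sR pR pK.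
pose g y := offdiag_block (Nmat y : 'M[R]_(n1, n2)).
have gz : 1%:M + g (vecN N) = Kmat N by rewrite /g Nmat_vecN -Kmat_offdiag.
have dK : 0 < \det (1%:M + g (vecN N)) by rewrite gz det_posdefmx_gt0 ?Kmat_sym.
have hK : is_hessian (fun y => ln (\det (Kmat (Nmat y)))) (vecN N)
    (fun u v => - \tr (invmx (Kmat N) *m g u *m invmx (Kmat N) *m g v)).
  rewrite -gz (_ : (fun y => _) = fun y => ln (\det (1%:M + g y))).
    exact: is_hessian_ln_det (@linear_offdiag_Nmat R n1 n2) dK.
  by apply/funext => y; rewrite Kmat_offdiag.
eexists.
  exact: is_hessianB (is_hessianD (is_hessianD (is_hessianD hf
    (is_hessian_cst _ _)) (is_hessian_cst _ _)) (is_hessian_cst _ _)) (is_hessianZ t^-1 hK).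
move=> v v0 /=.
have QK : 0 < \tr (invmx (Kmat N) *m g v *m invmx (Kmat N) *m g v).
  apply: mxtrace_sqr_gt0; rewrite ?trmx_inv ?Kmat_sym ?offdiag_block_sym //.
    exact/posdefmx_inv/pK/Kmat_sym.
  by apply: contra v0 => /eqP /offdiag_Nmat_eq0 ->.
have tV : 0 < t^-1 by rewrite invr_gt0.
have := Qf_ge0 v; have := mulr_gt0 tV QK.
rewrite !mulrN; lra.
Qed.

End BarrierProblem.

Theorem lemma1 (R : realType) (m n1 n2 J : nat) (n3 : 'I_J -> nat)
    (H1 : 'M[R]_(n1, m)) (H2 : 'M[R]_(n2, m)) (H3 : forall j : 'I_J, 'M[R]_(n3 j, m))
    (PT : R) (PI : 'I_J -> R)
    (hm : (1 <= m)%N) (hn1 : (1 <= n1)%N) (hn2 : (1 <= n2)%N)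
    (hPT : 0 < PT) (hPI : forall j, 0 < PI j)
    (t : R) (ht : 0 < t)
    (Rm : 'M[R]_m) (N : 'M[R]_(n1, n2))
    (hRsym : symmx Rm) (hRpd : posdef Rm) (hRtr : \tr Rm < PT)
    (hRI : forall j, \tr ((H3 j)^T *m H3 j *m Rm) < PI j)
    (hK : posdef (Kmat N)) :
  \det (hessian (fun x => ft_xy H1 H2 H3 PT PI t x (vecN N)) (veh Rm)) != 0 /\
  \det (hessian (fun y => ft_xy H1 H2 H3 PT PI t (veh Rm) y) (vecN N)) != 0.
Proof.
have [Qx hQx Qx_lt0] := ft_concave_in_R H1 H2 ht hRsym hRpd hK hRtr hRI.
have [Qy hQy Qy_gt0] := ft_convex_in_K H1 H2 H3 PT PI ht hRsym hRpd hK.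
rewrite /ft_xy Nmat_vecN Rmat_veh //; split.
  by apply: det_hessian_neq0 hQx _ => v /Qx_lt0 /ltr0_neq0.
by apply: det_hessian_neq0 hQy _ => v /Qy_gt0 /lt0r_neq0.
Qed.
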